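(* There is no function $f:\mathbb{N}\to\mathbb{N}$ such that $\operatorname{bw}(u(D))\le f(\operatorname{dbw}(D))$ for every digraph $D$.
   Context: $u(D)$ denotes the underlying undirected (multi)graph of $D$, with one undirected edge $xy$ for each directed edge $\vec{xy}$. The branch-width $\operatorname{bw}(G)$ of an undirected (multi)graph $G$ is the minimum width of a branch decomposition $(T,\tau)$, where $T$ is a tree of maximum degree at most three, $\tau$ a bijection from the leaves of $T$ onto $E(G)$, the order of an edge $t$ of $T$ is the number of vertices incident both with an edge in $\tau(Y)$ and an edge in $E(G)\setminus\tau(Y)$ ($Y$ the leaves on one side of $T-t$), and the width is the maximum order (0 if none). Directed branch-width: for $X\subseteq E(D)$, $S^V_X=\{y: \exists x,z,\ \vec{xy}\in E(D)\setminus X,\ \vec{yz}\in X\}$, $f_D(X)=|S^V_X\cup S^V_{E(D)\setminus X}|$; $\operatorname{dbw}(D)$ is defined like branch-width but with the order of a tree edge equal to $f_D(\beta(Y))$ for a bijection $\beta$ from leaves onto $E(D)$. *)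

From mathcomp Require Import all_boot.
From Stdlib Require Import ClassicalEpsilon.

Set Implicit Arguments.
Unset Strict Implicit.
Unset Printing Implicit Defensive.

(* Least natural number satisfying a (Prop) predicate; 0 if none. *)
Definition minnat (P : nat -> Prop) : nat :=
  epsilon (inhabits 0%N) (fun k => P k /\ forall j, P j -> (k <= j)%N).

(* A tree: finite nonempty node type, symmetric irreflexive adjacency,
   connected, and acyclic (every edge is a bridge). *)
Definition is_tree (N : finType) (adj : rel N) : Prop :=
  [/\ symmetric adj, irreflexive adj, (0 < #|N|)%N,
      (forall x y : N, connect adj x y) &
      (forall a b : N, adj a b ->
         ~~ connect [rel x y | adj x y &&
                        ~~ (((x == a) && (y == b)) || ((x == b) && (y == a)))] a b)].

Definition degree (N : finType) (adj : rel N) (x : N) : nat := #|[set y | adj x y]|.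

(* leaves: nodes of degree at most 1 (degree 0 only for the one-node tree) *)
Definition is_leaf (N : finType) (adj : rel N) (x : N) : bool := (degree adj x <= 1)%N.

Definition cut_rel (N : finType) (adj : rel N) (a b : N) : rel N :=
  [rel x y | adj x y && ~~ (((x == a) && (y == b)) || ((x == b) && (y == a)))].

Definition side_leaves (N : finType) (adj : rel N) (a b : N) : {set N} :=
  [set l | is_leaf adj l && connect (cut_rel adj a b) a l].

(* A branch-type decomposition of the finite set E with respect to the
   connectivity function conn, of width at most k:
   a tree T of max degree <= 3 and a bijection tau from the leaves of T
   onto E (given as a function on nodes, bijective on the leaves), such that
   every tree edge ab has order conn(tau(Y)) <= k, Y the leaves on one side. *)
Definition decomp_width_le (E : finType) (conn : {set E} -> nat) (k : nat) : Prop :=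
  exists (N : finType) (adj : rel N) (tau : N -> E),
    [/\ is_tree adj,
        (forall x, (degree adj x <= 3)%N),
        {in is_leaf adj &, injective tau},
        (forall e, exists2 l, is_leaf adj l & tau l = e) &
        (forall a b, adj a b -> (conn (tau @: side_leaves adj a b) <= k)%N)].

Definition decomp_width (E : finType) (conn : {set E} -> nat) : nat :=
  minnat (decomp_width_le conn).

Record mgraph := MGraph {
  mV : finType;
  mE : finType;
  mends : mE -> mV * mV  (* an edge joins its two ends (unordered) *)
}.

Definition incident (G : mgraph) (v : mV G) (e : mE G) : bool :=
  (v == (mends e).1) || (v == (mends e).2).

Definition uorder (G : mgraph) (X : {set mE G}) : nat :=
  #|[set v : mV G | [exists e in X, incident v e] && [exists e in ~: X, incident v e]]|.

Definition bw (G : mgraph) : nat := decomp_width (@uorder G).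

Record digraph := Digraph {
  dV : finType;
  dE : finType;
  dtail : dE -> dV;
  dhead : dE -> dV
}.

(* simple digraph: no loops, no parallel edges (antiparallel pairs allowed) *)
Definition simple_digraph (D : digraph) : Prop :=
  (forall e : dE D, dtail e <> dhead e) /\
  (forall e1 e2 : dE D, dtail e1 = dtail e2 -> dhead e1 = dhead e2 -> e1 = e2).

Definition u (D : digraph) : mgraph := @MGraph (dV D) (dE D) (fun e => (dtail e, dhead e)).

Definition SV (D : digraph) (X : {set dE D}) : {set dV D} :=
  [set y | [exists e1 in ~: X, dhead e1 == y] && [exists e2 in X, dtail e2 == y]].

Definition fD (D : digraph) (X : {set dE D}) : nat := #|SV X :|: SV (~: X)|.

Definition dbw (D : digraph) : nat := decomp_width (@fD D).

(* Counterexample family: the complete bipartite digraph K_{n,n} with every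
   edge oriented from the left to the right side.  No vertex has both an
   incoming and an outgoing edge, so every value of the directed
   connectivity function f_D vanishes and dbw(K_{n,n}) = 0 (a caterpillar
   gives a decomposition).  On the other hand bw(u(K_{n,n})) grows with n:
   in a branch decomposition of width k < n, every tree edge separates an
   edge set X whose border has at most k vertices; all edges avoiding the
   border lie on one side, so the other side has at most 2nk edges.  A tree
   of maximum degree three in which every edge has a side with at most M
   leaves has at most 1 + 3M leaves (look at a "sink" node all of whose
   incident edges have their small side pointing away from it).  Hence
   n^2 <= 1 + 6nk, which fails for k <= f(0) and n = 6 f(0) + 2. *)
From mathcomp Require Import all_boot zify.
From Stdlib Require Import ClassicalEpsilon.
Set Implicit Arguments. Unset Strict Implicit. Unset Printing Implicit Defensive.

Lemma minnat_spec (P : nat -> Prop) : (exists k, P k) ->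
  P (minnat P) /\ forall j, P j -> minnat P <= j.
Proof.
move=> exP; rewrite /minnat.
apply: (epsilon_spec (inhabits 0) (fun k => P k /\ forall j, P j -> k <= j)).
pose Pb k := if excluded_middle_informative (P k) then true else false.
have PbP k : reflect (P k) (Pb k).
  by rewrite /Pb; case: excluded_middle_informative => H; constructor.
have exPb : exists k, Pb k by case: exP => k /PbP; exists k.
by case: (ex_minnP exPb) => k /PbP Pk kmin; exists k; split=> // j /PbP /kmin.
Qed.

(* The caterpillar with spine nodes [inl i] (i < p+2), each carrying one
   pendant leaf [inr i]: a tree of maximum degree three with p+2 leaves. *)
Section Caterpillar.
Variable p : nat.
Notation m := p.+2.

Definition cat_node := ('I_m + 'I_m)%type.

Definition cat_adj : rel cat_node := fun x y =>
  match x, y with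
  | inl i, inl j => (i.+1 == j :> nat) || (j.+1 == i :> nat)
  | inl i, inr j | inr j, inl i => i == j :> nat
  | _, _ => false
  end.

Definition cat_pos (x : cat_node) : nat := match x with inl i | inr i => nat_of_ord i end.

Lemma cat_node_eqE (x y : cat_node) : (x == y) =
  match x, y with
  | inl i, inl j | inr i, inr j => i == j :> nat
  | _, _ => false
  end.
Proof. by case: x; case: y. Qed.

Lemma cat_sym : symmetric cat_adj.
Proof. by case=> i; case=> j //=; rewrite 1?orbC // eq_sym. Qed.

Lemma cat_irr : irreflexive cat_adj.
Proof. case=> i //=; lia. Qed.

Lemma cat_connect_ord0 x : connect cat_adj x (inl ord0).
Proof.
have spine k (Hk : k < m) : connect cat_adj (inl (Ordinal Hk)) (inl ord0).
  elim: k Hk => [|k IH] Hk; first by apply: eq_connect0; congr inl; apply: val_inj.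
  by apply: connect_trans (connect1 _) (IH (ltnW Hk)); rewrite /= eqxx orbT.
case: x => [[k Hk]|[k Hk]]; first exact: spine.
by apply: connect_trans (connect1 _) (spine k Hk); rewrite /=.
Qed.

(* Every edge is a bridge: after removing it, the side of its first end is
   closed under the remaining adjacency and does not contain the other end. *)
Lemma cat_bridge a b : cat_adj a b -> ~~ connect (cut_rel cat_adj a b) a b.
Proof.
case: a => i; case: b => j //= ij; apply/negP.
- pose Q := [pred x : cat_node | cat_pos x <= minn i j].
  have cl : closed (cut_rel cat_adj (inl i) (inl j)) Q.
    by move=> [u|u] [v|v]; rewrite /cut_rel /= ?cat_node_eqE /= !inE /=; lia.
  by move/(closed_connect cl); rewrite !inE /=; lia.
- pose Q := [pred x : cat_node | if x is inr v then v == j :> nat else false].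
  have cl : closed (cut_rel cat_adj (inl i) (inr j)) Q.
    by move=> [u|u] [v|v]; rewrite /cut_rel /= ?cat_node_eqE /= !inE /=; lia.
  by move/(closed_connect cl); rewrite !inE /=; lia.
- pose Q := [pred x : cat_node | if x is inr v then v == i :> nat else false].
  have cl : closed (cut_rel cat_adj (inr i) (inl j)) Q.
    by move=> [u|u] [v|v]; rewrite /cut_rel /= ?cat_node_eqE /= !inE /=; lia.
  by move/(closed_connect cl); rewrite !inE /=; lia.
Qed.

Lemma cat_tree : is_tree cat_adj.
Proof.
split; [exact: cat_sym | exact: cat_irr | by apply/card_gt0P; exists (inr ord0)| |].
- move=> x y; apply: connect_trans (cat_connect_ord0 x) _.
  by rewrite (sym_connect_sym cat_sym) cat_connect_ord0.
- exact: cat_bridge.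
Qed.

Lemma cat_degree_leg j : degree cat_adj (inr j) = 1.
Proof.
rewrite /degree (_ : [set y | cat_adj (inr j) y] = [set inl j]) ?cards1 //.
by apply/setP=> [[v|v]]; rewrite !inE /= ?cat_node_eqE /=; lia.
Qed.

Lemma cat_degree_spine i : 2 <= degree cat_adj (inl i) <= 3.
Proof.
have ltm := ltn_ord i.
rewrite /degree; apply/andP; split.
  pose k := if i == 0 :> nat then 1 else i.-1.
  have k_lt : k < m by rewrite /k; case: ifP; lia.
  apply: leq_trans (_ : #|[set inr i; inl (inord k)]| <= _); first by rewrite cards2.
  apply: subset_leq_card; apply/subsetP=> y; rewrite !inE.
  by case/orP=> /eqP ->; rewrite /= ?eqxx // inordK // /k; case: ifP; lia.
apply: leq_trans (_ : #|[set inr i; inl (inord i.-1); inl (inord i.+1)]| <= 3).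
  apply: subset_leq_card; apply/subsetP=> [[v|v]]; rewrite !inE /= ?cat_node_eqE /=;
    last by lia.
  have ltv := ltn_ord v.
  by case/orP=> E; [rewrite (@inordK _ i.+1) | rewrite (@inordK _ i.-1)]; lia.
apply: leq_trans (leq_card_setU _ _) _.
by rewrite cardsU1 !cards1; case: (_ \notin _).
Qed.

Lemma cat_leafE x : is_leaf cat_adj x = if x is inr _ then true else false.
Proof.
rewrite /is_leaf; case: x => v; last by rewrite cat_degree_leg.
by have := cat_degree_spine v; lia.
Qed.

(* Labelling leg i by the i-th element of a set of size p+2 gives a
   decomposition of that set. *)
Lemma caterpillar_decomp (E : finType) (conn : {set E} -> nat) k :
  #|E| = m -> (forall X, conn X <= k) -> decomp_width_le conn k.
Proof.
move=> card_E conn_le.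
have /card_gt0P[e0 _] : 0 < #|E| by rewrite card_E.
have size_enum : size (enum E) = m by rewrite -cardE card_E.
pose tau (x : cat_node) := nth e0 (enum E) (cat_pos x).
exists cat_node, cat_adj, tau; split.
- exact: cat_tree.
- by case=> v; [case/andP: (cat_degree_spine v) | rewrite cat_degree_leg].
- move=> x y; rewrite !unfold_in -[_ x <= 1]/(is_leaf _ x) -[_ y <= 1]/(is_leaf _ y).
  rewrite !cat_leafE; case: x => // i _; case: y => // j _.
  rewrite /tau /= => /eqP; rewrite nth_uniq ?size_enum ?ltn_ord ?enum_uniq //.
  by move=> /eqP ij; congr inr; apply: val_inj.
- move=> e; have ltm : index e (enum E) < m by rewrite -size_enum index_mem mem_enum.
  exists (inr (inord (index e (enum E)))); first by rewrite cat_leafE.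
  by rewrite /tau /= inordK // nth_index // mem_enum.
- by move=> a b _; apply: conn_le.
Qed.

End Caterpillar.

Section DecompositionWidth.
Variables (E : finType) (conn : {set E} -> nat).
Hypothesis E_gt1 : 1 < #|E|.

Lemma decomp_width_exists : decomp_width_le conn (decomp_width conn).
Proof.
have : exists k, decomp_width_le conn k.
  exists (\max_X conn X); apply: (@caterpillar_decomp #|E|.-2); first lia.
  exact: leq_bigmax.
by case/minnat_spec.
Qed.

Lemma decomp_width0 : (forall X, conn X = 0) -> decomp_width conn = 0.
Proof.
move=> conn0.
have dec0 : decomp_width_le conn 0.
  by apply: (@caterpillar_decomp #|E|.-2) => [|X]; rewrite ?conn0; lia.
by apply/eqP; rewrite -leqn0; apply: (minnat_spec (ex_intro _ 0 dec0)).2.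
Qed.

End DecompositionWidth.

Lemma card_bigcup_le (I T : finType) (A : {pred I}) (F : I -> {set T}) :
  #|\bigcup_(i in A) F i| <= \sum_(i in A) #|F i|.
Proof.
apply: (big_ind2 (fun (X : {set T}) s => #|X| <= s)) => //; first by rewrite cards0.
by move=> X1 s1 X2 s2 le1 le2; apply: leq_trans (leq_card_setU X1 X2) (leq_add le1 le2).
Qed.

Section TreeSides.
Variables (N : finType) (adj : rel N).
Hypothesis tree_adj : is_tree adj.

Lemma tree_sym : symmetric adj. Proof. by case: tree_adj. Qed.
Lemma tree_irr : irreflexive adj. Proof. by case: tree_adj. Qed.
Lemma tree_connect x y : connect adj x y. Proof. by case: tree_adj. Qed.
Lemma tree_bridge a b : adj a b -> ~~ connect (cut_rel adj a b) a b.
Proof. by case: tree_adj => _ _ _ _; apply. Qed.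

Lemma cut_relC a b : cut_rel adj a b =2 cut_rel adj b a.
Proof. by move=> x y; rewrite /cut_rel /= orbC. Qed.

Lemma cut_rel_sym a b : symmetric (cut_rel adj a b).
Proof.
move=> x y; rewrite /cut_rel /= tree_sym; congr (_ && ~~ _).
by rewrite orbC; congr (_ || _); rewrite andbC.
Qed.

Lemma path_cut w v x q : path adj x q -> all (predC1 v) (x :: q) ->
  path (cut_rel adj w v) x q.
Proof.
elim: q x => //= y q IH x /andP[xy yq] /and3P[xv yv qv].
rewrite IH ?yv ?qv // andbT /cut_rel /= xy /=.
by rewrite negb_or !negb_and (negbTE yv) (negbTE xv) !orbT.
Qed.

Definition side_nodes (a b : N) : {set N} := [set y | connect (cut_rel adj a b) a y].

Lemma side_nodes_proper a b c : adj a b -> adj b c -> a != c ->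
  side_nodes a b \proper side_nodes b c.
Proof.
move=> ab bc ac.
have bc' : b != c by apply: contraTneq bc => ->; rewrite tree_irr.
apply/properP; split; last by exists b; rewrite !inE ?connect0 // tree_bridge.
apply/subsetP=> y; rewrite !inE => /connectP[q aq ->].
have ba : cut_rel adj b c b a.
  by rewrite /cut_rel /= tree_sym ab (negbTE ac) (negbTE bc') andbF.
apply: (connect_trans (connect1 ba)).
rewrite -(eq_connect (cut_relC c b)); apply/connectP; exists q => //.
apply: path_cut; first by apply: sub_path aq => x z /andP[].
apply/allP=> z /path_connect-/(_ _ aq) az; apply: contraTneq az => ->.
exact: tree_bridge.
Qed.

Lemma side_leaves_disjoint a b l : adj a b ->
  l \in side_leaves adj b a -> l \notin side_leaves adj a b.
Proof.
move=> ab; rewrite !inE => /andP[_ bl]; apply/negP=> /andP[_ al].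
apply: (negP (tree_bridge ab)); apply: connect_trans al _.
by rewrite (sym_connect_sym (cut_rel_sym a b)) (eq_connect (cut_relC a b)).
Qed.

Lemma leaf_in_neighbour_side b l : is_leaf adj l -> l != b ->
  exists2 c, adj b c & l \in side_leaves adj c b.
Proof.
move=> leaf_l lb; have /connectP[q bq El] := tree_connect b l.
case: (shortenP bq) El leaf_l lb => [[|c q'] /= cq uq _ {bq}] El leaf_l lb.
  by rewrite El eqxx in lb.
case/andP: cq => bc cq'; case/andP: uq => bnq _.
exists c => //; rewrite inE leaf_l El; apply/connectP; exists q' => //.
apply: path_cut => //=; move: bnq; rewrite inE negb_or => /andP[bc' bq'].
rewrite eq_sym bc'; apply/allP=> y yq; apply: contraNneq bq' => <-.
by rewrite yq.
Qed.

(* If every tree edge has an orientation of weight at most M, some node b has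
   all its incident edges, oriented towards b, of weight at most M: take a
   light oriented edge ab whose side [side_nodes a b] away from b is largest. *)
Lemma light_sink (w : N -> N -> nat) M :
  (forall a b, adj a b -> w a b <= M \/ w b a <= M) ->
  exists b, forall c, adj b c -> w c b <= M.
Proof.
move=> light.
pose light_edge (e : N * N) := adj e.1 e.2 && (w e.1 e.2 <= M).
case: (pickP light_edge) => [e0 e0_light|none]; last first.
  have /card_gt0P[x0 _] : 0 < #|N| by case: tree_adj.
  exists x0 => c x0c; case: (light _ _ x0c) => // wx0c.
  by have := none (x0, c); rewrite /light_edge /= x0c wx0c.
have [[a b] /andP[/= ab wab] ab_max] :=
  arg_maxnP (fun e => #|side_nodes e.1 e.2|) e0_light.
exists b => c bc; case: (eqVneq c a) => [-> //|ca].
case: (light _ _ bc) => // wbc.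
have := ab_max (b, c); rewrite /light_edge /= bc wbc => /(_ isT).
by rewrite leqNgt proper_card // side_nodes_proper // eq_sym.
Qed.

Lemma side_labels_subsetC (E : finType) (tau : N -> E) a b :
  {in is_leaf adj &, injective tau} -> adj a b ->
  tau @: side_leaves adj b a \subset ~: (tau @: side_leaves adj a b).
Proof.
move=> tau_inj ab; apply/subsetP=> _ /imsetP[l lba ->]; rewrite inE.
apply/imsetP=> -[l' lab] /tau_inj.
have leaf_side x y z : z \in side_leaves adj x y -> is_leaf adj z.
  by rewrite inE => /andP[].
move=> /(_ (leaf_side _ _ _ lba) (leaf_side _ _ _ lab)) ll'.
by move: lab; rewrite -ll' (negbTE (side_leaves_disjoint ab lba)).
Qed.

Lemma card_labels_small_sides (E : finType) (tau : N -> E) M :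
  {in is_leaf adj &, injective tau} ->
  (forall e, exists2 l, is_leaf adj l & tau l = e) ->
  (forall x, degree adj x <= 3) ->
  (forall a b, adj a b ->
     #|tau @: side_leaves adj a b| <= M \/ #|~: (tau @: side_leaves adj a b)| <= M) ->
  #|E| <= 1 + 3 * M.
Proof.
move=> tau_inj tau_onto deg3 small.
pose side a b := tau @: side_leaves adj a b.
have oriented a b : adj a b -> #|side a b| <= M \/ #|side b a| <= M.
  move=> ab; case: (small a b ab) => [|small_ab]; [by left | right].
  exact: leq_trans (subset_leq_card (side_labels_subsetC tau_inj ab)) small_ab.
have [b b_sink] := light_sink oriented.
rewrite -cardsT.
apply: leq_trans (_ : #|tau b |: \bigcup_(c in [set c | adj b c]) side c b| <= _).
  apply: subset_leq_card; apply/subsetP=> e _; have [l leaf_l <-] := tau_onto e.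
  case: (eqVneq l b) => [->|lb]; first by rewrite setU11.
  have [c bc lc] := leaf_in_neighbour_side leaf_l lb.
  by rewrite setU1r //; apply/bigcupP; exists c; rewrite ?inE ?imset_f.
rewrite cardsU1 leq_add ?leq_b1 //.
apply: leq_trans (card_bigcup_le _ _) _.
apply: leq_trans (_ : \sum_(c in [set c | adj b c]) M <= _).
  by apply: leq_sum => c; rewrite inE => /b_sink.
by rewrite sum_nat_const leq_mul2r; apply/orP; right; apply: deg3.
Qed.

End TreeSides.

Section Border.
Variable G : mgraph.

Definition border (X : {set mE G}) : {set mV G} :=
  [set v | [exists e in X, incident v e] && [exists e in ~: X, incident v e]].

Lemma uorder_border X : uorder X = #|border X|. Proof. by []. Qed.

Lemma same_side_off_border X v e1 e2 : v \notin border X ->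
  incident v e1 -> incident v e2 -> (e1 \in X) = (e2 \in X).
Proof.
have split_sides e e' : e \in X -> e' \notin X -> incident v e -> incident v e' ->
    v \in border X.
  move=> eX e'X ve ve'; rewrite inE; apply/andP; split; apply/existsP.
    by exists e; rewrite eX.
  by exists e'; rewrite inE e'X.
move=> vB ve1 ve2; apply/idP/idP=> eX; apply: contraNT vB => eX'.
  exact: split_sides eX eX' ve1 ve2.
exact: split_sides eX eX' ve2 ve1.
Qed.

End Border.

Lemma fD_source_sink (D : digraph) :
  (forall e1 e2 : dE D, dhead e1 != dtail e2) -> forall X : {set dE D}, fD X = 0.
Proof.
move=> no_through X.
have SV0 (Y : {set dE D}) : SV Y = set0.
  apply/setP=> y; rewrite !inE; apply/negP.
  case/andP=> /existsP[e1 /andP[_ /eqP h1]] /existsP[e2 /andP[_ /eqP t2]].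
  by move: (no_through e1 e2); rewrite h1 t2 eqxx.
by rewrite /fD !SV0 setU0 cards0.
Qed.

Lemma exists_notin (T : finType) (A : {set T}) : #|A| < #|T| -> exists x, x \notin A.
Proof.
move=> small_A; have : 0 < #|~: A| by move: (cardsC A); lia.
by case/card_gt0P=> x; rewrite inE => xA; exists x.
Qed.

Lemma card_preimset_le (aT rT : finType) (g : aT -> rT) (A : {set rT}) :
  injective g -> #|g @^-1: A| <= #|A|.
Proof.
move=> g_inj; rewrite -(card_imset _ g_inj); apply: subset_leq_card.
by apply/subsetP=> y /imsetP[x]; rewrite inE => gx ->.
Qed.

Section CompleteBipartite.
Variable n : nat.

Definition Knn : digraph :=
  @Digraph ('I_n + 'I_n)%type ('I_n * 'I_n)%type (fun e => inl e.1) (fun e => inr e.2).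

Lemma Knn_simple : simple_digraph Knn.
Proof. by split=> [//|[i1 j1] [i2 j2] /= [->] [->]]. Qed.

Lemma Knn_card_edges : #|dE Knn| = n * n.
Proof. by rewrite card_prod card_ord. Qed.

Lemma Knn_fD (X : {set dE Knn}) : fD X = 0.
Proof. exact: fD_source_sink. Qed.

Lemma Knn_incident_left i j : @incident (u Knn) (inl i) (i, j).
Proof. by rewrite /incident eqxx. Qed.

Lemma Knn_incident_right i j : @incident (u Knn) (inr j) (i, j).
Proof. by rewrite /incident eqxx orbT. Qed.

(* If the border of X is smaller than n, fix a left vertex i0 and a right
   vertex j0 off the border.  An edge ij with both ends off the border lies on
   the side of i0j0 (through ij0), so the other side only contains edges with
   an end on the border: at most 2nk of them. *)
Lemma Knn_small_side (X : {set mE (u Knn)}) k : uorder X <= k -> k < n ->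
  #|X| <= 2 * n * k \/ #|~: X| <= 2 * n * k.
Proof.
rewrite uorder_border; set B := border X => card_B k_lt_n.
pose BL := inl @^-1: B; pose BR := inr @^-1: B.
have inBL i : (i \in BL) = (inl i \in B) by rewrite !inE.
have inBR j : (j \in BR) = (inr j \in B) by rewrite !inE.
have card_BL : #|BL| <= k by apply: leq_trans card_B; apply: card_preimset_le => ? ? [].
have card_BR : #|BR| <= k by apply: leq_trans card_B; apply: card_preimset_le => ? ? [].
have [i0 i0B] : exists i0, i0 \notin BL by apply: exists_notin; rewrite card_ord; lia.
have [j0 j0B] : exists j0, j0 \notin BR by apply: exists_notin; rewrite card_ord; lia.
pose Bad := [set e : 'I_n * 'I_n | (e.1 \in BL) || (e.2 \in BR)].
have card_Bad : #|Bad| <= 2 * n * k.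
  apply: leq_trans (_ : #|setX BL [set: 'I_n] :|: setX [set: 'I_n] BR| <= _).
    by apply: subset_leq_card; apply/subsetP=> -[i j]; rewrite !inE /= andbT.
  apply: leq_trans (leq_card_setU _ _) _; rewrite !cardsX cardsT card_ord.
  by rewrite -mulnA mul2n -addnn mulnC leq_add // leq_mul2l ?card_BL ?card_BR orbT.
have same_side e : e \notin Bad -> (e \in X) = ((i0, j0) \in X).
  case: e => i j; rewrite inE negb_or /= inBL inBR => /andP[iB jB].
  rewrite (same_side_off_border iB (Knn_incident_left i j) (Knn_incident_left i j0)).
  rewrite inBR in j0B.
  exact: same_side_off_border j0B (Knn_incident_right i j0) (Knn_incident_right i0 j0).
case X0 : ((i0, j0) \in X); [right | left]; apply: leq_trans card_Bad;
  apply: subset_leq_card; apply/subsetP=> e; apply: contraTT => /same_side eX;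
  by rewrite ?inE eX X0.
Qed.

End CompleteBipartite.

Theorem mainTheorem7 :
  ~ exists f : nat -> nat,
      forall D : digraph, simple_digraph D -> (bw (u D) <= f (dbw D))%N.
Proof.
case=> f bw_bound; pose c := f 0; pose n := (6 * c).+2.
have E_gt1 : 1 < #|dE (Knn n)| by rewrite Knn_card_edges /n; nia.
have dbw0 : dbw (Knn n) = 0 := decomp_width0 E_gt1 (@Knn_fD n).
have bw_le : bw (u (Knn n)) <= c by rewrite /c -dbw0; apply/bw_bound/Knn_simple.
have : decomp_width_le (@uorder (u (Knn n))) (bw (u (Knn n))).
  exact: decomp_width_exists E_gt1.
move: (bw _) bw_le => k k_le [N [adj [tau [tree deg3 tau_inj tau_onto width]]]].
have small a b : adj a b ->
    #|tau @: side_leaves adj a b| <= 2 * n * k \/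
    #|~: (tau @: side_leaves adj a b)| <= 2 * n * k.
  by move=> ab; apply: Knn_small_side (width a b ab) _; rewrite /n; lia.
have := card_labels_small_sides tree tau_inj tau_onto deg3 small.
by rewrite Knn_card_edges /n; nia.
Qed.
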